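(* For every $\ell\in\mathbb N\cup\{\infty\}$ (with $\mathbb N$ the positive integers), there exists an integral domain that is not atomic, is an IDF domain, and contains exactly $\ell$ irreducible elements up to associates.
   Context: For an integral domain $R$, an irreducible (atom) is a nonzero nonunit $a$ such that $a=uv$ implies $u$ or $v$ is a unit. $R$ is atomic if every nonzero nonunit is a finite product of irreducibles. $R$ is an IDF domain if every nonzero element is divisible by only finitely many irreducibles up to associates. *)

From HB Require Import structures.
From mathcomp Require Import all_boot all_algebra.
Set Implicit Arguments. Unset Strict Implicit. Unset Printing Implicit Defensive.
Import GRing.Theory.
Local Open Scope ring_scope.

Definition rdivides (R : idomainType) (a x : R) : Prop := exists c : R, x = a * c.

Definition associated (R : idomainType) (a b : R) : Prop :=
  exists u : R, u \is a GRing.unit /\ a = u * b.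

Definition irreducible_elt (R : idomainType) (a : R) : Prop :=
  a != 0 /\ a \isn't a GRing.unit /\
  forall u v : R, a = u * v -> u \is a GRing.unit \/ v \is a GRing.unit.

Definition atomic (R : idomainType) : Prop :=
  forall x : R, x != 0 -> x \isn't a GRing.unit ->
    exists s : seq R, (forall a, a \in s -> irreducible_elt a) /\
                      x = \prod_(a <- s) a.

Definition IDF (R : idomainType) : Prop :=
  forall x : R, x != 0 ->
    exists s : seq R, forall a : R, irreducible_elt a -> rdivides a x ->
      exists2 b, b \in s & associated a b.

Definition atoms_up_to_assoc_card (R : idomainType) (n : nat) : Prop :=
  exists s : seq R,
    [/\ size s = n,
        (forall a, a \in s -> irreducible_elt a),
        (forall i j, (i < size s)%N -> (j < size s)%N -> i <> j ->
           ~ associated (nth 0 s i) (nth 0 s j)) &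
        (forall a : R, irreducible_elt a -> exists2 b, b \in s & associated a b)].

Definition atoms_up_to_assoc_infinite (R : idomainType) : Prop :=
  exists f : nat -> R, (forall i, irreducible_elt (f i)) /\
    (forall i j, i <> j -> ~ associated (f i) (f j)).

(* ell : option nat encodes N ∪ {∞}: Some n is n (n >= 1), None is ∞. *)
Definition exactly_atoms (R : idomainType) (ell : option nat) : Prop :=
  match ell with
  | Some n => atoms_up_to_assoc_card R n
  | None => atoms_up_to_assoc_infinite R
  end.

From HB Require Import structures.
From mathcomp Require Import all_boot all_algebra.
From mathcomp Require Import ring zify boolp.
Set Implicit Arguments. Unset Strict Implicit. Unset Printing Implicit Defensive.
Import GRing.Theory Num.Theory.
Local Open Scope ring_scope.

(* Both rings are "D + M" constructions.  Let Z_S be the ring of rationals whose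
   denominators avoid the first n primes p_0, ..., p_(n-1), and let ev : V -> Q be a
   ring morphism out of a Q-algebra V; put R = {x in V | ev x in Z_S}.  Any x with
   ev x = 0 factors as p_0 * (x / p_0) inside R, so atoms never vanish under ev and
   a nonzero element of the kernel has no factorization into atoms: R is not atomic.
   An atom a with (ev a)^-1 outside Z_S is associated to some p_i.
   For finite l = n take V = Q[X] localized at (X) and ev = evaluation at 0: every
   element of V with nonzero value is a unit, so the atoms of R are exactly the n
   pairwise non-associated p_i and R is trivially IDF.
   For l = oo take V = Q[X] and n = 1: the polynomials 1 + (i+1)X are pairwise
   non-associated atoms, every atom is associated to 2 or to a polynomial with
   constant term 1, and a polynomial has finitely many divisors up to scalars. *)

Section SubringDomain.
Variables (A : idomainType) (S : subringClosed A).

Definition subdom := {x : A | x \in S}.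
HB.instance Definition _ := SubChoice.copy subdom {x : A | x \in S}.
HB.instance Definition _ := [SubChoice_isSubComNzRing of subdom by <:].

(* Units of a subring are not decidable in general: they are decided and inverted
   classically. *)
Definition subdom_unit (x : subdom) : bool := `[< exists y : subdom, y * x = 1 >].
Definition subdom_inv (x : subdom) : subdom :=
  if pselect (exists y : subdom, y * x = 1) is left ex then projT1 (cid ex) else x.

Lemma subdom_mulVr : {in subdom_unit, left_inverse 1 subdom_inv *%R}.
Proof.
move=> x /asboolP ex; rewrite /subdom_inv; case: pselect => // {}ex.
by case: cid.
Qed.

Lemma subdom_unitP (x y : subdom) : y * x = 1 -> subdom_unit x.
Proof. by move=> yx; apply/asboolP; exists y. Qed.

Lemma subdom_inv_out : {in [predC subdom_unit], subdom_inv =1 id}.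
Proof. by move=> x /asboolP nex; rewrite /subdom_inv; case: pselect. Qed.

HB.instance Definition _ :=
  GRing.ComNzRing_hasMulInverse.Build subdom subdom_mulVr subdom_unitP subdom_inv_out.

Lemma subdom_idomain : GRing.integral_domain_axiom subdom.
Proof.
move=> x y /(congr1 val) /= /eqP; rewrite mulf_eq0 => /orP[] /eqP xy0;
  apply/orP; [left | right]; apply/eqP; exact: val_inj.
Qed.

HB.instance Definition _ := GRing.ComUnitRing_isIntegral.Build subdom subdom_idomain.

Lemma subdom_unitE (x : subdom) :
  x \is a GRing.unit <-> exists2 y, y \in S & y * val x = 1.
Proof.
split=> [/unitrP[y [yx _]] | [y Sy yx]].
  by exists (val y); [exact: valP | exact: (congr1 val yx)].
by apply/unitrP; exists (Sub y Sy); split; apply: val_inj; rewrite //= mulrC.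
Qed.

(* Stated separately because [rmorphB] and [rmorphM] fail to recognize [val] once
   [subdom] is seen through its [idomainType] instance. *)
Lemma subdom_valB (x y : subdom) : val (x - y) = val x - val y.
Proof. by []. Qed.

Lemma subdom_valM (x y : subdom) : val (x * y) = val x * val y.
Proof. by []. Qed.
End SubringDomain.

Fixpoint prime_seq (i : nat) : nat :=
  if i is i'.+1 then sval (prime_above (prime_seq i')) else 2.

Lemma prime_seq_prime i : prime (prime_seq i).
Proof. by case: i => [|i] //=; case: prime_above. Qed.

Lemma prime_seq_inj : injective prime_seq.
Proof.
have lt_seq : {homo prime_seq : i j / (i < j)%N}.
  by apply: homo_ltn => [y x z|i]; [exact: ltn_trans | rewrite /=; case: prime_above].
by move=> i j eq_ij; apply/eqP; case: ltngtP => // /lt_seq; rewrite eq_ij ltnn.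
Qed.

Lemma prime_seq_neq0 (R : numDomainType) i : (prime_seq i)%:R != 0 :> R.
Proof. by rewrite pnatr_eq0 -lt0n prime_gt0 ?prime_seq_prime. Qed.

Lemma prime_seq_dvdzM i (a b : int) :
  ((prime_seq i)%:Z %| a * b)%Z = ((prime_seq i)%:Z %| a)%Z || ((prime_seq i)%:Z %| b)%Z.
Proof. by rewrite !unfold_in /dvdz abszM Euclid_dvdM ?prime_seq_prime. Qed.

Lemma prime_seq_Ndvdz i j : i != j -> ~~ ((prime_seq i)%:Z %| (prime_seq j)%:Z)%Z.
Proof.
move=> neq_ij; rewrite unfold_in /dvdz /= dvdn_prime2 ?prime_seq_prime //.
by apply: contra neq_ij => /eqP /prime_seq_inj ->.
Qed.

Lemma prime_seq_Ndvdz1 i : ~~ ((prime_seq i)%:Z %| 1)%Z.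
Proof. by rewrite unfold_in /dvdz /= Euclid_dvd1 ?prime_seq_prime. Qed.

Section SemilocalIntegers.
Variable n : nat.

Definition Zloc_den (b : int) :=
  b != 0 /\ forall i, (i < n)%N -> ~~ ((prime_seq i)%:Z %| b)%Z.

Definition Zloc : {pred rat} :=
  fun q => `[< exists a b : int, Zloc_den b /\ q = a%:~R / b%:~R >].

Lemma ZlocP q : reflect (exists a b : int, Zloc_den b /\ q = a%:~R / b%:~R) (q \in Zloc).
Proof. exact: asboolP. Qed.

Lemma Zloc_denM b c : Zloc_den b -> Zloc_den c -> Zloc_den (b * c).
Proof.
move=> [b0 Nb] [c0 Nc]; split=> [|i lt_in]; first by rewrite mulf_neq0.
by rewrite prime_seq_dvdzM negb_or Nb ?Nc.
Qed.

Lemma Zloc_den1 : Zloc_den 1.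
Proof. by split=> // i _; apply: prime_seq_Ndvdz1. Qed.

Lemma Zloc_subring_closed : subring_closed Zloc.
Proof.
split=> [|_ _ /ZlocP[a [b [Db ->]]] /ZlocP[c [d [Dd ->]]]|
          _ _ /ZlocP[a [b [Db ->]]] /ZlocP[c [d [Dd ->]]]]; apply/ZlocP.
- by exists 1, 1; split; [exact: Zloc_den1 | rewrite divr1].
- exists (a * d - c * b), (b * d); split; first exact: Zloc_denM.
  have [[b0 _] [d0 _]] := (Db, Dd).
  rewrite rmorphB !rmorphM /=; field.
  by rewrite !intr_eq0 b0 d0.
- exists (a * c), (b * d); split; first exact: Zloc_denM.
  have [[b0 _] [d0 _]] := (Db, Dd).
  rewrite !rmorphM /=; field.
  by rewrite !intr_eq0 b0 d0.
Qed.

HB.instance Definition _ := GRing.isSubringClosed.Build rat Zloc Zloc_subring_closed.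

Lemma Zloc_nonunit_div q : q \in Zloc -> q^-1 \notin Zloc ->
  exists2 i, (i < n)%N & q / (prime_seq i)%:R \in Zloc.
Proof.
move=> /ZlocP[a [b [[b0 Nb] ->]]] Nunit.
have [[i lt_in dvd_ia] | Ndvd] := pselect (exists2 i, (i < n)%N & ((prime_seq i)%:Z %| a)%Z).
  exists i => //; apply/ZlocP; exists (a %/ (prime_seq i)%:Z)%Z, b; split=> //.
  rewrite -[in LHS](divzK dvd_ia) rmorphM /=; field.
  by rewrite intr_eq0 b0 prime_seq_neq0.
have a0 : a != 0.
  by apply: contraNneq Nunit => ->; rewrite mul0r invr0 rpred0.
case/negP: Nunit; apply/ZlocP; exists b, a; split; last by rewrite invf_div.
split=> // i lt_in; apply/negP => dvd_ia; exact: Ndvd (ex_intro2 _ _ i lt_in dvd_ia).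
Qed.

Lemma Zloc_Ndvd j (m c : int) : (j < n)%N -> c != 0 ->
  ~~ ((prime_seq j)%:Z %| m)%Z -> m%:~R / ((prime_seq j)%:R * c%:~R) \notin Zloc.
Proof.
move=> lt_jn c0 Ndvd; apply/ZlocP => -[a [b [[b0 Nb] eq_q]]].
have cross : m * b = (prime_seq j)%:Z * c * a.
  have pc0 : (prime_seq j)%:R * c%:~R != 0 :> rat by rewrite mulf_neq0 ?prime_seq_neq0 ?intr_eq0.
  move/eqP: eq_q; rewrite eqr_div ?intr_eq0 // => /eqP eq_q.
  by apply: (@intr_inj rat); rewrite !rmorphM /= eq_q mulrC.
have : ((prime_seq j)%:Z %| m * b)%Z by rewrite cross -mulrA dvdz_mulr.
by rewrite prime_seq_dvdzM (negbTE Ndvd) (negbTE (Nb j lt_jn)).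
Qed.

Lemma Zloc_prime_inv i : (i < n)%N -> (prime_seq i)%:R^-1 \notin Zloc.
Proof.
by move=> lt_in; have := Zloc_Ndvd lt_in (oner_neq0 _) (prime_seq_Ndvdz1 i); rewrite !mulr1 div1r.
Qed.

Lemma Zloc_prime_div i j : (i < n)%N -> i != j ->
  (prime_seq j)%:R / (prime_seq i)%:R \notin Zloc.
Proof.
by move=> lt_in neq_ij; have := Zloc_Ndvd lt_in (oner_neq0 _) (prime_seq_Ndvdz neq_ij); rewrite mulr1.
Qed.

Lemma Zloc_prime_irreducible i a b : (i < n)%N -> a \in Zloc -> b \in Zloc ->
  a * b = (prime_seq i)%:R -> a^-1 \in Zloc \/ b^-1 \in Zloc.
Proof.
move=> lt_in Za Zb ab_p; apply: contrapT => /not_orP[/negP Na /negP Nb].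
have [j lt_jn Za'] := Zloc_nonunit_div Za Na.
have [k lt_kn Zb'] := Zloc_nonunit_div Zb Nb.
have := rpredM Za' Zb'.
have -> : a / (prime_seq j)%:R * (b / (prime_seq k)%:R) =
          (prime_seq i)%:R / ((prime_seq j)%:R * (prime_seq k)%:R).
  by rewrite -ab_p; field; rewrite !prime_seq_neq0.
have [<-|neq_ji] := eqVneq j i.
  have -> : (prime_seq j)%:R / ((prime_seq j)%:R * (prime_seq k)%:R) =
            1%:~R / ((prime_seq k)%:R * 1%:~R) :> rat.
    by field; rewrite !prime_seq_neq0.
  by apply/negP/Zloc_Ndvd; rewrite ?prime_seq_Ndvdz1.
apply/negP/(Zloc_Ndvd (m := (prime_seq i)%:Z) (c := (prime_seq k)%:Z)) => //.
  by rewrite eqz_nat -lt0n prime_gt0 ?prime_seq_prime.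
exact: prime_seq_Ndvdz.
Qed.
End SemilocalIntegers.

Section Pullback.
Variables (V : idomainType) (ev : {rmorphism V -> rat}) (n : nat).
Hypothesis natr_unit : forall m, m.+1%:R \is a @GRing.unit V.

Definition pullback : {pred V} := fun x => ev x \in Zloc n.

Lemma pullback_subring_closed : subring_closed pullback.
Proof.
split=> [|x y Zx Zy|x y Zx Zy]; rewrite unfold_in /pullback ?rmorph1 ?rmorphB ?rmorphM.
- exact: rpred1.
- exact: rpredB.
- exact: rpredM.
Qed.

HB.instance Definition _ := GRing.isSubringClosed.Build V pullback pullback_subring_closed.

Local Notation R := (subdom pullback).
Local Notation p_ i := ((prime_seq i)%:R : R).

Lemma ev_val_prime i : ev (val (p_ i)) = (prime_seq i)%:R.
Proof. by rewrite !rmorph_nat. Qed.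

Lemma prime_seq_unit i : (prime_seq i)%:R \is a @GRing.unit V.
Proof. by have := natr_unit (prime_seq i).-1; rewrite prednK ?prime_gt0 ?prime_seq_prime. Qed.

Lemma pullback_unitE (x : R) :
  x \is a GRing.unit <-> val x \is a GRing.unit /\ (ev (val x))^-1 \in Zloc n.
Proof.
split=> [/subdom_unitE[y Zy yx] | [ux Zx]].
  have xy : val x * y = 1 by rewrite mulrC.
  have ux : val x \is a GRing.unit by apply/unitrPr; exists y.
  by split=> //; rewrite -rmorphV // (mulr1_eq xy).
apply/subdom_unitE; exists (val x)^-1; last exact: mulVr.
by rewrite unfold_in /pullback rmorphV.
Qed.

Lemma pullback_unit_ev (x : R) : x \is a GRing.unit -> ev (val x) != 0.
Proof.
by case/pullback_unitE => /(rmorph_unit ev); rewrite unitfE.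
Qed.

Lemma pullback_prime_nunit i : (i < n)%N -> p_ i \isn't a GRing.unit.
Proof.
by move=> lt_in; apply/negP => /pullback_unitE[_]; rewrite ev_val_prime; apply/negP/Zloc_prime_inv.
Qed.

Lemma pullback_div_prime (x : R) i : ev (val x) / (prime_seq i)%:R \in Zloc n ->
  exists2 y : R, x = p_ i * y & ev (val y) = ev (val x) / (prime_seq i)%:R.
Proof.
have ev_div : ev (val x / (prime_seq i)%:R) = ev (val x) / (prime_seq i)%:R.
  by rewrite rmorphM rmorphV ?prime_seq_unit // rmorph_nat.
move=> Zev; have Zy : val x / (prime_seq i)%:R \in pullback by rewrite unfold_in /pullback ev_div.
exists (Sub (val x / (prime_seq i)%:R) Zy : R); last by rewrite SubK.
by apply: val_inj; rewrite rmorphM rmorph_nat /= mulrC divrK ?prime_seq_unit.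
Qed.

Lemma pullback_irreducible_ev (a : R) : (0 < n)%N -> irreducible_elt a -> ev (val a) != 0.
Proof.
move=> n_gt0 [_ [_ irr_a]]; apply/negP => /eqP ev_a0.
have [|y a_py ev_y] := @pullback_div_prime a 0; first by rewrite ev_a0 mul0r rpred0.
case: (irr_a _ _ a_py) => [p_unit | /pullback_unit_ev].
  by move: (pullback_prime_nunit n_gt0); rewrite p_unit.
by rewrite ev_y ev_a0 mul0r eqxx.
Qed.

Lemma pullback_irreducible_assoc (a : R) : irreducible_elt a ->
  (ev (val a))^-1 \notin Zloc n -> exists2 i, (i < n)%N & associated a (p_ i).
Proof.
move=> [_ [_ irr_a]] Na.
have [i lt_in /pullback_div_prime[y a_py _]] := Zloc_nonunit_div (valP a) Na.
exists i => //; exists y; split; last by rewrite mulrC.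
case: (irr_a _ _ a_py) => // p_unit.
by move: (pullback_prime_nunit lt_in); rewrite p_unit.
Qed.

Lemma pullback_not_atomic (t : V) : (0 < n)%N -> t != 0 -> ev t = 0 -> ~ atomic R.
Proof.
move=> n_gt0 t0 ev_t0 atomicR.
have Zt : t \in pullback by rewrite unfold_in /pullback ev_t0 rpred0.
pose x : R := Sub t Zt.
have x0 : x != 0 by apply: contra t0 => /eqP/(congr1 val) /= ->.
have Nx : x \isn't a GRing.unit by apply/negP => /pullback_unit_ev; rewrite /= ev_t0 eqxx.
have [s [irr_s x_prod]] := atomicR x x0 Nx.
move: (congr1 ev (congr1 val x_prod)).
rewrite SubK ev_t0 rmorph_prod rmorph_prod => /esym/eqP.
rewrite prodf_seq_eq0 => /hasP[a /irr_s irr_a /=]; apply/negP.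
exact: pullback_irreducible_ev.
Qed.

Section Local.
Hypothesis ev_local : forall x : V, ev x != 0 -> x \is a GRing.unit.

Lemma pullback_local_unitE (x : R) :
  x \is a GRing.unit <-> ev (val x) != 0 /\ (ev (val x))^-1 \in Zloc n.
Proof.
split=> [ux | [x0 Zx]]; last by apply/pullback_unitE; split; first exact: ev_local.
by split; [exact: pullback_unit_ev | case/pullback_unitE: ux].
Qed.

Lemma pullback_prime_irreducible i : (i < n)%N -> irreducible_elt (p_ i).
Proof.
move=> lt_in; split; [|split; [exact: pullback_prime_nunit|]].
- apply: contraTneq isT => /(congr1 val)/(congr1 ev).
  rewrite ev_val_prime !rmorph0 => /eqP.
  by rewrite (negbTE (prime_seq_neq0 _ _)).
- move=> u v p_uv.
  have := congr1 ev (congr1 val p_uv).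
  rewrite ev_val_prime subdom_valM rmorphM => /esym ev_uv.
  have uv0 : ev (val u) * ev (val v) != 0 by rewrite ev_uv prime_seq_neq0.
  case: (Zloc_prime_irreducible lt_in (valP u) (valP v) ev_uv) => Zinv;
    [left | right]; apply/pullback_local_unitE; split=> //;
    by apply: contraNneq uv0 => ->; rewrite ?mul0r ?mulr0.
Qed.

Lemma pullback_prime_nassoc i j : (i < n)%N -> i != j -> ~ associated (p_ j) (p_ i).
Proof.
move=> lt_in neq_ij [u [_ p_up]].
have ev_u : ev (val u) = (prime_seq j)%:R / (prime_seq i)%:R.
  have := congr1 ev (congr1 val p_up).
  by rewrite subdom_valM rmorphM !ev_val_prime => ->; rewrite mulfK ?prime_seq_neq0.
by move: (valP u); rewrite unfold_in /pullback ev_u; apply/negP/Zloc_prime_div.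
Qed.

Lemma pullback_local_irreducible_assoc (a : R) : (0 < n)%N -> irreducible_elt a ->
  exists2 i, (i < n)%N & associated a (p_ i).
Proof.
move=> n_gt0 irr_a; apply: pullback_irreducible_assoc => //; apply/negP => Za.
have [_ [+ _]] := irr_a; apply/negP/negPn/pullback_local_unitE; split=> //.
exact: pullback_irreducible_ev.
Qed.

Lemma pullback_local_IDF : (0 < n)%N -> IDF R.
Proof.
move=> n_gt0 x _; exists [seq p_ i | i <- iota 0 n] => a irr_a _.
have [i lt_in a_pi] := pullback_local_irreducible_assoc n_gt0 irr_a.
by exists (p_ i) => //; apply: map_f; rewrite mem_iota.
Qed.

Lemma pullback_local_card : (0 < n)%N -> atoms_up_to_assoc_card R n.
Proof.
move=> n_gt0; exists [seq p_ i | i <- iota 0 n]; split.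
- by rewrite size_map size_iota.
- by move=> a /mapP[i]; rewrite mem_iota => /andP[_ lt_in] ->; apply: pullback_prime_irreducible.
- move=> i j; rewrite size_map size_iota => lt_in lt_jn neq_ij.
  rewrite !(nth_map 0%N) ?size_iota // !nth_iota //.
  by apply: pullback_prime_nassoc => //; rewrite eq_sym; apply/eqP.
- move=> a irr_a; have [i lt_in a_pi] := pullback_local_irreducible_assoc n_gt0 irr_a.
  by exists (p_ i) => //; apply: map_f; rewrite mem_iota.
Qed.
End Local.
End Pullback.

Local Notation "x %:F" := (@tofrac _ x).

Definition regular_at0 : {pred {fraction {poly rat}}} :=
  fun x => `[< exists f g : {poly rat}, g.[0] != 0 /\ x * g%:F = f%:F >].

Lemma regular_at0P x :
  reflect (exists f g : {poly rat}, g.[0] != 0 /\ x * g%:F = f%:F) (x \in regular_at0).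
Proof. exact: asboolP. Qed.

Lemma regular_at0_subring_closed : subring_closed regular_at0.
Proof.
split=> [|x y /regular_at0P[f [g [g0 xg]]] /regular_at0P[f' [g' [g0' yg']]]|
          x y /regular_at0P[f [g [g0 xg]]] /regular_at0P[f' [g' [g0' yg']]]];
  apply/regular_at0P.
- by exists 1, 1; rewrite mulr1 hornerC oner_neq0.
- exists (f * g' - f' * g), (g * g'); rewrite hornerM mulf_neq0 //.
  by split=> //; rewrite tofracB !tofracM -xg -yg'; ring.
- exists (f * f'), (g * g'); rewrite hornerM mulf_neq0 //.
  by split=> //; rewrite !tofracM -xg -yg'; ring.
Qed.

HB.instance Definition _ :=
  GRing.isSubringClosed.Build _ regular_at0 regular_at0_subring_closed.

Definition frac_eval0 (x : subdom regular_at0) : rat :=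
  let: exist f ex_g := cid (elimT (regular_at0P _) (valP x)) in
  let: exist g _ := cid ex_g in f.[0] / g.[0].

Lemma frac_eval0E (x : subdom regular_at0) (f g : {poly rat}) :
  g.[0] != 0 -> val x * g%:F = f%:F -> frac_eval0 x = f.[0] / g.[0].
Proof.
rewrite /frac_eval0 => g0 xg; case: cid => f' ex_g; case: cid => g' [g0' xg'].
have cross : f' * g = f * g'.
  by apply/eqP; rewrite -tofrac_eq !rmorphM /= -xg -xg' mulrAC.
by apply/eqP; rewrite eqr_div // -!hornerM cross.
Qed.

Lemma regular_at0_repr (x : subdom regular_at0) :
  exists f g : {poly rat}, [/\ g.[0] != 0, val x * g%:F = f%:F & frac_eval0 x = f.[0] / g.[0]].
Proof.
have [f [g [g0 xg]]] := elimT (regular_at0P _) (valP x).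
by exists f, g; split=> //; apply: frac_eval0E.
Qed.

Lemma frac_eval0_is_zmod_morphism : zmod_morphism frac_eval0.
Proof.
move=> x y; have [f [g [g0 xg ->]]] := regular_at0_repr x.
have [f' [g' [g0' yg' ->]]] := regular_at0_repr y.
rewrite (@frac_eval0E _ (f * g' - f' * g) (g * g')) ?hornerM ?mulf_neq0 //.
  by rewrite hornerD hornerN !hornerM; field; rewrite g0 g0'.
by rewrite subdom_valB tofracB !tofracM -xg -yg'; ring.
Qed.

Lemma frac_eval0_is_monoid_morphism : monoid_morphism frac_eval0.
Proof.
split=> [|x y]; first by rewrite (@frac_eval0E _ 1 1) ?mulr1 ?hornerC ?divr1 ?oner_neq0.
have [f [g [g0 xg ->]]] := regular_at0_repr x.
have [f' [g' [g0' yg' ->]]] := regular_at0_repr y.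
rewrite (@frac_eval0E _ (f * f') (g * g')) ?hornerM ?mulf_neq0 //.
  by field; rewrite g0 g0'.
by rewrite subdom_valM !tofracM -xg -yg'; ring.
Qed.

HB.instance Definition _ := GRing.isZmodMorphism.Build _ _ frac_eval0 frac_eval0_is_zmod_morphism.
HB.instance Definition _ := GRing.isMonoidMorphism.Build _ _ frac_eval0 frac_eval0_is_monoid_morphism.

Lemma tofrac_poly_neq0 (g : {poly rat}) : g.[0] != 0 -> g%:F != 0.
Proof. by rewrite tofrac_eq0; apply: contraNneq => ->; rewrite horner0. Qed.

Lemma frac_eval0_local (x : subdom regular_at0) : frac_eval0 x != 0 -> x \is a GRing.unit.
Proof.
have [f [g [g0 xg ->]]] := regular_at0_repr x => fg0.
have f0 : f.[0] != 0 by apply: contraNneq fg0 => ->; rewrite mul0r.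
apply/subdom_unitE; exists (g%:F / f%:F).
  by apply/regular_at0P; exists g, f; rewrite divfK ?tofrac_poly_neq0.
by rewrite mulrAC [g%:F * _]mulrC xg mulfV ?tofrac_poly_neq0.
Qed.

Lemma regular_at0_natr_unit m : m.+1%:R \is a @GRing.unit (subdom regular_at0).
Proof. by apply: frac_eval0_local; rewrite rmorph_nat pnatr_eq0. Qed.

Lemma regular_at0_X : 'X%:F \in regular_at0.
Proof. by apply/regular_at0P; exists 'X, 1; rewrite mulr1 hornerC oner_neq0. Qed.

Lemma nonatomic_IDF_finite_atoms n : (0 < n)%N ->
  exists R : idomainType, [/\ ~ atomic R, IDF R & atoms_up_to_assoc_card R n].
Proof.
move=> n_gt0; exists (subdom (pullback frac_eval0 n)); split.
- pose X : subdom regular_at0 := Sub 'X%:F regular_at0_X.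
  apply: (@pullback_not_atomic _ _ _ regular_at0_natr_unit X n_gt0).
    by apply: contraTneq isT => /(congr1 val); rewrite SubK => /eqP; rewrite tofrac_eq0 polyX_eq0.
  change (frac_eval0 X = 0); rewrite (@frac_eval0E X 'X 1) ?SubK ?mulr1 ?hornerX ?mul0r //.
  by rewrite hornerC oner_neq0.
- apply: pullback_local_IDF => //; [exact: regular_at0_natr_unit | exact: frac_eval0_local].
- apply: pullback_local_card => //; [exact: regular_at0_natr_unit | exact: frac_eval0_local].
Qed.

Section PolyDivisors.
Variable F : fieldType.
Implicit Types p q h d : {poly F}.

Lemma irreducible_dvdp_exists p : (1 < size p)%N -> exists2 q, irreducible_poly q & q %| p.
Proof.
have [m] := ubnP (size p); elim: m p => // m IH p /ltnSE le_pm gt1_p.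
have [irr_p | red_p] := pselect (irreducible_poly p); first by exists p.
have p0 : p != 0 by rewrite -size_poly_gt0 (ltn_trans _ gt1_p).
have [q [q1 dvd_qp Nqp]] : exists q, [/\ size q != 1, q %| p & ~ q %= p].
  apply: contrapT => none; apply: red_p; split=> // q q1 dvd_qp.
  by apply: contrapT => Nqp; apply: none; exists q.
have q0 : q != 0 by apply: contraTneq dvd_qp => ->; rewrite dvd0p.
have lt_qp : (size q < size p)%N.
  by rewrite ltn_neqAle dvdp_leq // andbT dvdp_size_eqp //; apply/negP.
have gt1_q : (1 < size q)%N by rewrite ltn_neqAle eq_sym q1 size_poly_gt0.
have [r irr_r dvd_rq] := IH q (leq_trans lt_qp le_pm) gt1_q.
by exists r => //; apply: dvdp_trans dvd_rq dvd_qp.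
Qed.

(* For an irreducible factor [g] of [h], a divisor of [h] is either [g] times a divisor
   of [h %/ g], or coprime to [g] and then itself a divisor of [h %/ g]. *)
Lemma dvdp_finite h : h != 0 ->
  exists L : seq {poly F}, forall d, d %| h -> exists2 e, e \in L & d %= e.
Proof.
have [m] := ubnP (size h); elim: m h => // m IH h /ltnSE le_hm h0.
have [le_h1 | gt1_h] := leqP (size h) 1.
  exists [:: 1 : {poly F}] => d dvd_dh; exists 1; rewrite ?mem_seq1 //.
  rewrite /eqp dvd1p andbT dvdp1 eqn_leq size_poly_gt0.
  rewrite (leq_trans (dvdp_leq h0 dvd_dh)) //=.
  by apply: contraNneq h0 => d0; rewrite -dvd0p -d0.
have [g [gt1_g irr_g] /dvdpP[h' h_eq]] := irreducible_dvdp_exists gt1_h.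
have g0 : g != 0 by rewrite -size_poly_gt0 (ltn_trans _ gt1_g).
have h'0 : h' != 0 by apply: contraNneq h0 => h'0; rewrite h_eq h'0 mul0r.
have lt_h' : (size h' < size h)%N.
  rewrite h_eq size_mul // -subn1 -addnBA ?(ltnW gt1_g) //.
  by rewrite -[X in (X < _)%N]addn0 ltn_add2l subn_gt0.
have [L hL] := IH h' (leq_trans lt_h' le_hm) h'0.
exists (L ++ [seq g * e | e <- L]) => d dvd_dh.
have [dvd_gd | Ndvd_gd] := boolP (g %| d).
  have [d' d_eq] := dvdpP _ _ dvd_gd.
  have : d' %| h' by rewrite -(dvdp_mul2r _ _ g0) -d_eq -h_eq.
  case/hL => e Le d'_e; exists (g * e); first by rewrite mem_cat map_f ?orbT.
  by rewrite d_eq mulrC eqp_mul2l.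
have : d %| h' by rewrite -(Gauss_dvdpl _ (_ : coprimep d g)) -?h_eq // coprimep_sym irreducible_poly_coprime.
by case/hL => e Le d_e; exists e; rewrite ?mem_cat ?Le.
Qed.

Definition normal_at0 p := (p.[0])^-1 *: p.

Lemma normal_at0_eqp p q : p %= q -> p.[0] != 0 -> normal_at0 q = normal_at0 p.
Proof.
move=> /eqpP[[c1 c2] /andP[c10 c20] /= pq] p0.
have q_eq : q = (c1 / c2) *: p by rewrite mulrC -scalerA pq scalerA mulVf ?scale1r.
by rewrite /normal_at0 q_eq hornerZ scalerA; congr (_ *: _); field; rewrite p0 c10 c20.
Qed.

Lemma horner_normal_at0 p : p.[0] != 0 -> (normal_at0 p).[0] = 1.
Proof. by move=> p0; rewrite hornerZ mulVf. Qed.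
End PolyDivisors.

Definition poly_eval0 : {rmorphism {poly rat} -> rat} := horner_eval 0.

Lemma poly_eval0E (p : {poly rat}) : poly_eval0 p = p.[0].
Proof. by []. Qed.

Section PolynomialPullback.
Local Notation R := (subdom (pullback poly_eval0 1)).

Lemma poly_natr_unit m : m.+1%:R \is a @GRing.unit {poly rat}.
Proof. by rewrite -polyC_natr poly_unitE size_polyC coefC unitfE !pnatr_eq0. Qed.

Lemma poly_pullback_unitE (x : R) :
  x \is a GRing.unit <-> size (val x) = 1%N /\ ((val x).[0])^-1 \in Zloc 1.
Proof.
rewrite pullback_unitE poly_eval0E poly_unitE unitfE.
split=> [[/andP[/eqP-> _]] // | [s1 Zx]]; split=> //; rewrite s1 eqxx /=.
have x0 : val x != 0 by rewrite -size_poly_eq0 s1.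
by move: x0; rewrite -lead_coef_eq0 lead_coefE s1.
Qed.

Lemma poly_pullback_const_unit (u v : R) :
  (val u).[0] * (val v).[0] = 1 -> size (val u) = 1%N -> u \is a GRing.unit.
Proof.
move=> uv1 s1; apply/poly_pullback_unitE; split=> //.
by rewrite (mulr1_eq uv1); move: (valP v); rewrite unfold_in /pullback poly_eval0E.
Qed.

Definition line_poly (i : nat) : {poly rat} := i.+1%:R *: 'X + 1.

Lemma line_poly_size i : size (line_poly i) = 2%N.
Proof.
by rewrite size_addl size_scale ?size_polyX ?size_poly1 ?pnatr_eq0.
Qed.

Lemma line_poly_pullback i : line_poly i \in pullback poly_eval0 1.
Proof. by rewrite unfold_in /pullback poly_eval0E !hornerE rpred1. Qed.

Definition line_atom i : R := Sub (line_poly i) (line_poly_pullback i).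

Lemma line_atom_irreducible i : irreducible_elt (line_atom i).
Proof.
have a0 : line_poly i != 0 by rewrite -size_poly_eq0 line_poly_size.
split; last split.
- by apply: contra a0 => /eqP/(congr1 val); rewrite SubK => ->.
- by apply/negP => /poly_pullback_unitE[]; rewrite SubK line_poly_size.
move=> u v /(congr1 val); rewrite SubK subdom_valM => a_uv.
have uv1 : (val u).[0] * (val v).[0] = 1 by rewrite -hornerM -a_uv !hornerE.
have [u0 v0] : val u != 0 /\ val v != 0.
  by apply/andP; rewrite -negb_or -mulf_eq0 -a_uv.
have s_uv : (size (val u) + size (val v)).-1 = 2%N by rewrite -size_mul // -a_uv line_poly_size.
have := size_poly_gt0 (val u); have := size_poly_gt0 (val v); rewrite u0 v0 => gt0_v gt0_u.
have [su1 | sv1] : size (val u) = 1%N \/ size (val v) = 1%N by lia.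
- by left; apply: poly_pullback_const_unit uv1 su1.
- by right; apply: (poly_pullback_const_unit (v := u)) sv1; rewrite mulrC.
Qed.

Lemma line_atom_nassoc i j : i <> j -> ~ associated (line_atom i) (line_atom j).
Proof.
move=> neq_ij [u [/poly_pullback_unitE[s1 _] /(congr1 val)]].
rewrite subdom_valM !SubK (size1_polyC (eq_leq s1)) => a_ij.
have := congr1 (horner^~ 0) a_ij; rewrite !hornerE /= => c1.
have := congr1 (horner^~ 1) a_ij; rewrite !hornerE /= -c1 mul1r.
by move/addIr/eqP; rewrite eqr_nat eqSS => /eqP.
Qed.

Lemma poly_pullback_IDF : IDF R.
Proof.
move=> h h0; have val_h0 : val h != 0 by apply: contra h0 => /eqP val_h0; apply/eqP/val_inj.
have [L hL] := dvdp_finite val_h0.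
exists ((prime_seq 0)%:R :: [seq insubd 1 (normal_at0 e) | e <- L]) => a irr_a [c h_ac].
have := pullback_irreducible_ev poly_natr_unit (ltn0Sn 0) irr_a; rewrite poly_eval0E => a0.
have [Za | Na] := boolP (((val a).[0])^-1 \in Zloc 1); last first.
  have [|i] := @pullback_irreducible_assoc _ _ _ poly_natr_unit a irr_a; first by rewrite poly_eval0E.
  by rewrite ltnS leqn0 => /eqP-> a_p; exists (prime_seq 0)%:R; rewrite ?mem_head.
have [e Le a_e] : exists2 e, e \in L & val a %= e by apply: hL; rewrite h_ac subdom_valM dvdp_mulIl.
have Zna : normal_at0 (val a) \in pullback poly_eval0 1.
  by rewrite unfold_in /pullback poly_eval0E horner_normal_at0 ?rpred1.
have Zc : ((val a).[0])%:P \in pullback poly_eval0 1.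
  by rewrite unfold_in /pullback poly_eval0E hornerC -poly_eval0E; exact: (valP a).
exists (Sub (normal_at0 (val a)) Zna : R).
  rewrite inE; apply/orP; right; apply/mapP; exists e => //.
  by apply: val_inj; rewrite SubK insubdK (normal_at0_eqp a_e a0).
exists (Sub ((val a).[0])%:P Zc : R); split.
  apply/poly_pullback_unitE; rewrite SubK size_polyC a0 hornerC; split=> //.
by apply: val_inj; rewrite subdom_valM !SubK mul_polyC scalerA mulfV ?scale1r.
Qed.
End PolynomialPullback.

Lemma nonatomic_IDF_infinite_atoms :
  exists R : idomainType, [/\ ~ atomic R, IDF R & atoms_up_to_assoc_infinite R].
Proof.
exists (subdom (pullback poly_eval0 1)); split.
- apply: (@pullback_not_atomic _ _ _ poly_natr_unit 'X) => //; first by rewrite polyX_eq0.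
  by rewrite poly_eval0E hornerX.
- exact: poly_pullback_IDF.
- by exists line_atom; split; [exact: line_atom_irreducible | exact: line_atom_nassoc].
Qed.

Theorem mainTheorem4 (ell : option nat) :
  (if ell is Some n then (0 < n)%N else true) ->
  exists R : idomainType, ~ atomic R /\ IDF R /\ exactly_atoms R ell.
Proof.
case: ell => [n n_gt0 | _] /=.
  by have [R [? ? ?]] := nonatomic_IDF_finite_atoms n_gt0; exists R.
by have [R [? ? ?]] := nonatomic_IDF_infinite_atoms; exists R.
Qed.
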